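(* If the set of control constraints $\mathcal{U}$ satisfies Putinar's condition, then so does the set $\mathcal{T}\cup\mathcal{B}\cup\mathcal{U}$ (as a set of polynomials in the variables $(t,x,u)$).
   Context: Fix $n\ge1$, $T>0$, $K\ge1$. Let $\mathcal{U}=\{q_1,\dots,q_r\}$ be real polynomials in $u\in\mathbb{R}^K$ such that $U=\{u:q(u)\ge0\ \forall q\in\mathcal{U}\}$ is compact. A Hermitian trace-one matrix $\rho\in\mathbb{C}^{n\times n}$ is represented by the real vector $x$ consisting of $\operatorname{Re}\rho_{ij}$ for $1\le i\le j\le n$ excluding $\operatorname{Re}\rho_{nn}$, and $\operatorname{Im}\rho_{ij}$ for $1\le i<j\le n$ (with $\rho_{nn}=1-\sum_{i<n}\rho_{ii}$, $\rho_{ji}=\overline{\rho_{ij}}$); in these coordinates $\operatorname{tr}\rho^2=(1-\sum_{i=1}^{n-1}\operatorname{Re}\rho_{ii})^2+\sum_{i=1}^{n-1}\operatorname{Re}\rho_{ii}^2+2\sum_{1\le i<j\le n}|\rho_{ij}|^2$. Set $\mathcal{T}=\{t,\ T-t\}$ (polynomials in $t$) and $\mathcal{B}=\{1-\operatorname{tr}\rho^2,\ \operatorname{tr}\rho^2-1\}$ (polynomials in $x$). For a finite set $\mathcal{S}=\{a_1,\dots,a_p\}$ of real polynomials in variables $y=(y_1,\dots,y_N)$, $Q_d[\mathcal{S}]=\{s_0+\sum_{i=1}^p s_ia_i: s_i \text{ sums of squares of real polynomials in } y,\ \deg(s_ia_i)\le d\}$. $\mathcal{S}$ satisfies Putinar's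 condition if there exists $M>0$ such that $M-\sum_{i=1}^N y_i^2\in Q_d[\mathcal{S}]$ for some $d$. *)

From HB Require Import structures.
From mathcomp Require Import all_boot all_order all_algebra.
From mathcomp Require Import reals.
From mathcomp Require Import mpoly.
Set Implicit Arguments. Unset Strict Implicit. Unset Printing Implicit Defensive.
Import Order.TTheory GRing.Theory Num.Theory.
Local Open Scope ring_scope.

Section Quadmod.
Variables (R : realType) (N : nat).

Definition is_sos (s : {mpoly R[N]}) : Prop :=
  exists l : seq {mpoly R[N]}, s = \sum_(p <- l) p ^+ 2.

(* total degree of p is <= d (the zero polynomial has degree -oo);
   msize p = 1 + total degree, msize 0 = 0 *)
Definition deg_le (p : {mpoly R[N]}) (d : nat) : Prop := (msize p <= d.+1)%N.

Definition in_Qd (d : nat) (S : seq {mpoly R[N]}) (f : {mpoly R[N]}) : Prop :=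
  exists (s0 : {mpoly R[N]}) (s : seq {mpoly R[N]}),
    [/\ size s = size S,
        is_sos s0 /\ deg_le s0 d,
        forall i, (i < size S)%N -> is_sos s`_i /\ deg_le (s`_i * S`_i) d
      & f = s0 + \sum_(i < size S) s`_i * S`_i].

Definition putinar (S : seq {mpoly R[N]}) : Prop :=
  exists M : R, 0 < M /\
    exists d : nat, in_Qd d S (M%:MP - \sum_(i < N) 'X_i ^+ 2).

End Quadmod.

(* Off-diagonal index pairs i < j of an n x n matrix. *)
Definition Pairs (n : nat) := {p : 'I_n * 'I_n | (p.1 < p.2)%N}.

(* number of real coordinates of x: (n-1) diagonal reals, and for each i<j
   Re and Im of rho_ij : total n^2 - 1 *)
Definition nx (n : nat) : nat := (n.-1 + (#|{: Pairs n}| + #|{: Pairs n}|))%N.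

Definition nvars (n K : nat) : nat := (1 + nx n + K)%N.

Definition tvar (n K : nat) : 'I_(nvars n K) :=
  lshift K (lshift (nx n) (ord0 : 'I_1)).
(* x-coordinate Re rho_{i+1,i+1}, i < n-1 *)
Definition avar (n K : nat) (i : 'I_n.-1) : 'I_(nvars n K) :=
  lshift K (rshift 1 (lshift (#|{: Pairs n}| + #|{: Pairs n}|) i)).
(* x-coordinate Re rho_ij, i<j *)
Definition bvar (n K : nat) (p : Pairs n) : 'I_(nvars n K) :=
  lshift K (rshift 1 (rshift n.-1 (lshift #|{: Pairs n}| (enum_rank p)))).
(* x-coordinate Im rho_ij, i<j *)
Definition cvar (n K : nat) (p : Pairs n) : 'I_(nvars n K) :=
  lshift K (rshift 1 (rshift n.-1 (rshift #|{: Pairs n}| (enum_rank p)))).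
Definition uvar (n K : nat) (k : 'I_K) : 'I_(nvars n K) :=
  rshift (1 + nx n) k.

Section Sets.
Variables (R : realType) (n K : nat).
Local Notation P := {mpoly R[nvars n K]}.

Definition trrho2 : P :=
  (1 - \sum_(i < n.-1) 'X_(avar K i)) ^+ 2
  + \sum_(i < n.-1) 'X_(avar K i) ^+ 2
  + 2%:R * \sum_(p : Pairs n) ('X_(bvar K p) ^+ 2 + 'X_(cvar K p) ^+ 2).

Definition Tset (T : R) : seq P := [:: 'X_(tvar n K); T%:MP - 'X_(tvar n K)].
Definition Bset : seq P := [:: 1 - trrho2; trrho2 - 1].

Definition lift_u (q : {mpoly R[K]}) : P :=
  q \mPo [tuple 'X_(uvar n i) | i < K].

Definition TBU (T : R) (U : seq {mpoly R[K]}) : seq P :=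
  Tset T ++ Bset ++ map lift_u U.
End Sets.

From HB Require Import structures.
From mathcomp Require Import all_boot all_order all_algebra.
From mathcomp Require Import reals.
From mathcomp Require Import mpoly.
From mathcomp Require Import ring.
Set Implicit Arguments. Unset Strict Implicit. Unset Printing Implicit Defensive.
Import Order.TTheory GRing.Theory Num.Theory.
Local Open Scope ring_scope.

(* The certificate splits along the three groups of variables.  For the time,
   T^2 - t^2 = (T - t)^2/T * t + (T + t^2/T) * (T - t).  For the state,
   1 - |x|^2 = (1 - tr rho^2) + (1 - sum_i Re rho_ii)^2 + sum_(i<j) |rho_ij|^2.
   For the control, M - |u|^2 has a certificate over U, which lifts to the
   variables (t, x, u).  Adding the three gives (T^2 + 1 + M) - |(t, x, u)|^2
   in the quadratic module of T, B and U. *)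

Section QuadraticModule.
Variables (R : realType) (N : nat).
Local Notation P := {mpoly R[N]}.
Implicit Types (p f g : P) (S : seq P).

Lemma is_sos0 : is_sos (0 : P).
Proof. by exists [::]; rewrite big_nil. Qed.

Lemma is_sos_sqr p : is_sos (p ^+ 2).
Proof. by exists [:: p]; rewrite big_seq1. Qed.

Lemma is_sos1 : is_sos (1 : P).
Proof. by rewrite -(expr1n _ 2); apply: is_sos_sqr. Qed.

Lemma is_sosD f g : is_sos f -> is_sos g -> is_sos (f + g).
Proof. by move=> [l ->] [m ->]; exists (l ++ m); rewrite big_cat. Qed.

Lemma is_sos_sum I (r : seq I) (F : I -> P) :
  (forall i, is_sos (F i)) -> is_sos (\sum_(i <- r) F i).
Proof.
move=> sosF; elim: r => [|i r IHr]; first by rewrite big_nil; apply: is_sos0.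
by rewrite big_cons; apply: is_sosD.
Qed.

Lemma is_sos_mulC (c : R) p : 0 <= c -> is_sos p -> is_sos (c%:MP * p).
Proof.
move=> c_ge0 [l ->]; exists [seq (Num.sqrt c)%:MP * q | q <- l].
rewrite big_map mulr_sumr; apply: eq_bigr => q _.
by rewrite exprMn -rmorphXn /= sqr_sqrtr.
Qed.

Definition in_qmodule S f : Prop :=
  exists (s0 : P) (s : seq P),
    [/\ size s = size S, is_sos s0, forall i, (i < size S)%N -> is_sos s`_i
      & f = s0 + \sum_(i < size S) s`_i * S`_i].

Lemma in_QdP S f : (exists d, in_Qd d S f) <-> in_qmodule S f.
Proof.
split=> [[d [s0 [s [size_s [sos_s0 _] sos_s ->]]]]|].
  by exists s0, s; split=> // i /sos_s[].
move=> [s0 [s [size_s sos_s0 sos_s ->]]].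
exists (maxn (msize s0) (\max_(i < size S) msize (s`_i * S`_i))), s0, s.
split=> //; first by split; rewrite // /deg_le leqW // leq_maxl.
move=> i ltiS; split; first exact: sos_s.
rewrite /deg_le leqW // (leq_trans _ (leq_maxr _ _)) //.
exact: (@leq_bigmax _ (fun j : 'I_(size S) => msize (s`_j * S`_j)) (Ordinal ltiS)).
Qed.

Lemma putinarP S :
  putinar S <->
  exists2 M : R, 0 < M & in_qmodule S (M%:MP - \sum_(i < N) 'X_i ^+ 2).
Proof.
by split=> [[M [M_gt0 /in_QdP]]|[M M_gt0 /in_QdP]]; exists M.
Qed.

Lemma in_qmodule_catD S1 S2 f g :
  in_qmodule S1 f -> in_qmodule S2 g -> in_qmodule (S1 ++ S2) (f + g).
Proof.
move=> [s0 [s [size_s sos_s0 sos_s ->]]] [r0 [r [size_r sos_r0 sos_r ->]]].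
exists (s0 + r0), (s ++ r); split.
- by rewrite !size_cat size_s size_r.
- exact: is_sosD.
- move=> i; rewrite size_cat nth_cat size_s => lt_iS.
  case: ltnP => [lt_iS1|le_S1i]; first exact: sos_s.
  by apply: sos_r; rewrite ltn_subLR // addnC.
rewrite size_cat big_split_ord /= addrACA.
congr (_ + _ + (_ + _)); apply: eq_bigr => i _; rewrite !nth_cat size_s ?ltn_ord //.
by rewrite ltnNge leq_addr /= addKn.
Qed.

Lemma in_qmodule_head S a f : is_sos (f - a) -> in_qmodule (a :: S) f.
Proof.
move=> sos_fa; exists (f - a), (1 :: nseq (size S) 0); split=> //.
- by rewrite /= size_nseq.
- by case=> [|i] _ /=; rewrite ?nth_nseq ?if_same; [apply: is_sos1|apply: is_sos0].
rewrite big_ord_recl /= mul1r big1 ?addr0 ?subrK // => i _.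
by rewrite nth_nseq if_same mul0r.
Qed.

Lemma in_qmodule_interval (T : R) p :
  0 < T -> in_qmodule [:: p; T%:MP - p] ((T ^+ 2)%:MP - p ^+ 2).
Proof.
move=> T_gt0; have iT_ge0 : 0 <= T^-1 by rewrite invr_ge0 ltW.
exists 0, [:: T^-1%:MP * (T%:MP - p) ^+ 2; T^-1%:MP * (T%:MP ^+ 2 + p ^+ 2)].
split=> //; first exact: is_sos0.
  case=> [|[|//]] _ /=; apply: is_sos_mulC => //; first exact: is_sos_sqr.
  by apply: is_sosD; apply: is_sos_sqr.
rewrite !big_ord_recl big_ord0 /= add0r addr0.
have -> : T^-1%:MP * (T%:MP - p) ^+ 2 * p
          + T^-1%:MP * (T%:MP ^+ 2 + p ^+ 2) * (T%:MP - p)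
        = (T^-1%:MP * T%:MP) * (T%:MP ^+ 2 - p ^+ 2) by ring.
by rewrite -rmorphM /= mulVf ?gt_eqF // mpolyC1 mul1r rmorphXn.
Qed.

End QuadraticModule.

Lemma is_sos_rmorph (R : realType) N N'
    (phi : {rmorphism {mpoly R[N]} -> {mpoly R[N']}}) p :
  is_sos p -> is_sos (phi p).
Proof.
move=> [l ->]; exists (map phi l).
by rewrite rmorph_sum big_map; apply: eq_bigr => q _; rewrite rmorphXn.
Qed.

Lemma in_qmodule_rmorph (R : realType) N N'
    (phi : {rmorphism {mpoly R[N]} -> {mpoly R[N']}}) S f :
  in_qmodule S f -> in_qmodule (map phi S) (phi f).
Proof.
move=> [s0 [s [size_s sos_s0 sos_s ->]]].
exists (phi s0), (map phi s); split.
- by rewrite !size_map.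
- exact: is_sos_rmorph.
- move=> i; rewrite size_map => ltiS.
  by rewrite (nth_map 0) ?size_s //; apply/is_sos_rmorph/sos_s.
rewrite rmorphD rmorph_sum size_map; congr (_ + _); apply: eq_bigr => i _.
by rewrite !(nth_map 0) ?size_s // rmorphM.
Qed.

Section Coordinates.
Variables (R : realType) (n K : nat).
Local Notation P := {mpoly R[nvars n K]}.

Definition xsqnorm : P :=
  \sum_(i < n.-1) 'X_(avar K i) ^+ 2
  + \sum_(p : Pairs n) ('X_(bvar K p) ^+ 2 + 'X_(cvar K p) ^+ 2).

Lemma lift_u_sum_sqr :
  lift_u n (\sum_(k < K) 'X_k ^+ 2) = \sum_(k < K) 'X_(uvar n k) ^+ 2 :> P.
Proof.
rewrite /lift_u rmorph_sum; apply: eq_bigr => k _.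
by rewrite rmorphXn /= comp_mpolyXU -tnth_nth tnth_mktuple.
Qed.

Lemma sum_sqr_nvars :
  \sum_(i < nvars n K) 'X_i ^+ 2
  = 'X_(tvar n K) ^+ 2 + xsqnorm + lift_u n (\sum_(k < K) 'X_k ^+ 2) :> P.
Proof.
rewrite lift_u_sum_sqr /nvars big_split_ord /= big_split_ord /= big_ord1.
rewrite /nx big_split_ord /= big_split_ord /= /xsqnorm -big_split /=.
by rewrite (reindex (@enum_rank (Pairs n))) //; exists enum_val => x _;
  [rewrite enum_rankK | rewrite enum_valK].
Qed.

Lemma in_qmodule_Bset : in_qmodule (Bset R n K) (1 - xsqnorm).
Proof.
apply: in_qmodule_head.
have -> : 1 - xsqnorm - (1 - trrho2 R n K)
        = (1 - \sum_(i < n.-1) 'X_(avar K i)) ^+ 2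
          + \sum_(p : Pairs n) ('X_(bvar K p) ^+ 2 + 'X_(cvar K p) ^+ 2).
  rewrite /xsqnorm /trrho2; set A := \sum_(i < _) _; set B := \sum_(p : _) _.
  by set A1 := \sum_(i < _) _; ring.
apply: is_sosD; first exact: is_sos_sqr.
by apply: is_sos_sum => p; apply: is_sosD; apply: is_sos_sqr.
Qed.

End Coordinates.

Theorem lemma4 (R : realType) (n K : nat) (T : R) (U : seq {mpoly R[K]}) :
  (1 <= n)%N -> (1 <= K)%N -> 0 < T ->
  putinar U -> putinar (TBU n T U).
Proof.
move=> _ _ T_gt0 /putinarP[M M_gt0 certU]; apply/putinarP.
exists (T ^+ 2 + 1 + M); first by rewrite -addrA ltr_wpDl ?sqr_ge0 ?addr_gt0.
have certT := in_qmodule_interval 'X_(tvar n K) T_gt0.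
have certTB := in_qmodule_catD certT (in_qmodule_Bset R n K).
have certTBU := in_qmodule_catD certTB (in_qmodule_rmorph (comp_mpoly _) certU).
rewrite /TBU catA.
suff -> : (T ^+ 2 + 1 + M)%:MP - \sum_(i < nvars n K) 'X_i ^+ 2
        = (T ^+ 2)%:MP - 'X_(tvar n K) ^+ 2 + (1 - xsqnorm R n K)
          + lift_u n (M%:MP - \sum_(k < K) 'X_k ^+ 2) by exact: certTBU.
rewrite sum_sqr_nvars /lift_u rmorphB /= comp_mpolyC !mpolyCD mpolyC1.
set t := 'X_(tvar n K); set x := xsqnorm R n K; set u := comp_mpoly _ _.
by ring.
Qed.
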